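(* Let $n_1,n_2,n_3$ be integers with $3\le n_1,n_2\le n_3$ and $3\max(n_1,n_2)\le 2n_3\le n_1n_2$. For every set $W$ produced by the Middle Cone Construction described below, the landmark graph $\mathcal{G}(W)$ contains no bad $4$-cycle.
   Context: For a vertex set $W$ of $K_{n_1}\times K_{n_2}\times K_{n_3}$ (vertices are triples $(x_1,x_2,x_3)$, $1\le x_i\le n_i$), $W_{i,a}=\{w\in W:w_i=a\}$; the landmark graph $\mathcal{G}(W)$ is the hypergraph on $W$ whose hyperedges are the nonempty $W_{i,a}$, colored $i$. Bad $4$-cycle: distinct $w_1,\dots,w_4\in W$ and $\{i,j,k\}=\{1,2,3\}$ such that $\{w_1,w_2\}$ and $\{w_3,w_4\}$ are hyperedges of color $i$, $w_2,w_3$ lie in a common hyperedge of color $j$, and $w_4,w_1$ lie in a common hyperedge of color $k$. Multiplicities: write $n_3=qn_1+r$, $0\le r\le n_1-1$. If $r\le n_1-r$, $(\ell_1,\dots,\ell_{n_1})$ is $(q+1,q)$ repeated $r$ times followed by $n_1-2r$ copies of $q$; if $r>n_1-r$, it is $(q+1,q)$ repeated $n_1-r$ times followed by $2r-n_1$ copies of $q+1$. Let $L_i=\sum_{j<i}\ell_j$; block $i$ is the set of columns $c$ with $L_i<c\le L_i+\ell_i$; $s_i=L_i+1$. Middle Cone Construction: $W=W^L\cup W^R$, each consisting of $n_3$ landmarks indexed by columns $c=1,\dots,n_3$. Left column $c$ in block $i$ is $(i,y^L_c,c)$; right column $c$ in block $i$ is $(i+1,y^R_c,c)$ with $n_1+1$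 read as $1$. Even $n_2$, $h=n_2/2$: $y^L_c=((c-1)\bmod h)+1$, $y^R_c=h+((c-1)\bmod h)+1$. Odd $n_2$, $f=(n_2-1)/2$, $k=\#\{i:\ell_i>f\}$: let $S=\{s_i:\ell_i>f\}$ if $k\ge2$ and $S=\{1\}$ if $k\le1$. Set $y^L_c=n_2$ for $c\in S$ and fill the other left columns in increasing order with $1,\dots,f,1,\dots,f,\dots$; set $y^R_c=n_2$ for $c\in S+1$ and fill the other right columns in increasing order with $f+1,\dots,2f,f+1,\dots,2f,\dots$. If $k\le1$, additionally change one left landmark of the form $(x,1,z)$ with $x\notin\{1,2,n_1\}$ to $(x,n_2,z)$ (any such choice). *)

From mathcomp Require Import all_boot.
Set Implicit Arguments. Unset Strict Implicit. Unset Printing Implicit Defensive.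

(* Vertices of K_{n1} x K_{n2} x K_{n3}: triples (x1,x2,x3). *)
Definition vtx := (nat * nat * nat)%type.
Definition coord (i : nat) (v : vtx) : nat :=
  match i with 1 => v.1.1 | 2 => v.1.2 | _ => v.2 end.

Definition vset := vtx -> Prop.

(* {u,v} is exactly a hyperedge W_{i,a} of color i (for some a). *)
Definition is_hedge2 (W : vset) (i : nat) (u v : vtx) : Prop :=
  exists a, forall w, (W w /\ coord i w = a) <-> (w = u \/ w = v).

Definition bad4cycle (W : vset) : Prop :=
  exists (w1 w2 w3 w4 : vtx) (i j k : nat),
    [/\ W w1, W w2, W w3 & W w4] /\
    (w1 <> w2 /\ w1 <> w3 /\ w1 <> w4 /\ w2 <> w3 /\ w2 <> w4 /\ w3 <> w4) /\
    (i \in [:: 1; 2; 3] /\ j \in [:: 1; 2; 3] /\ k \in [:: 1; 2; 3] /\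
        i != j /\ i != k /\ j != k) /\
    [/\ is_hedge2 W i w1 w2, is_hedge2 W i w3 w4,
        coord j w2 = coord j w3 & coord k w4 = coord k w1].

Section MCC.
Variables n1 n2 n3 : nat.

Definition qq := n3 %/ n1.
Definition rr := n3 %% n1.

Definition ell (i : nat) : nat :=
  if rr <= n1 - rr then
    (if i <= 2 * rr then (if odd i then qq.+1 else qq) else qq)
  else
    (if i <= 2 * (n1 - rr) then (if odd i then qq.+1 else qq) else qq.+1).

Definition LL (i : nat) : nat := \sum_(1 <= j < i) ell j.
Definition ss (i : nat) : nat := LL i + 1.

Definition in_block (i c : nat) : Prop := LL i < c <= LL i + ell i.

Definition hh := n2 %/ 2.
Definition yL_even (c : nat) : nat := ((c - 1) %% hh) + 1.
Definition yR_even (c : nat) : nat := hh + ((c - 1) %% hh) + 1.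

Definition ff := (n2 - 1) %/ 2.
Definition kk : nat := count (fun i => ff < ell i) (iota 1 n1).
Definition inS (c : nat) : bool :=
  if 2 <= kk then has (fun i => (ff < ell i) && (c == ss i)) (iota 1 n1)
  else c == 1.
Definition inS1 (c : nat) : bool := (0 < c) && inS c.-1.
Definition yL_odd (c : nat) : nat :=
  if inS c then n2
  else (count (fun c' => ~~ inS c') (iota 1 (c - 1)) %% ff) + 1.
Definition yR_odd (c : nat) : nat :=
  if inS1 c then n2
  else ff + (count (fun c' => ~~ inS1 c') (iota 1 (c - 1)) %% ff) + 1.

Definition yL (c : nat) : nat := if odd n2 then yL_odd c else yL_even c.
Definition yR (c : nat) : nat := if odd n2 then yR_odd c else yR_even c.

Definition succ1 (i : nat) : nat := if i == n1 then 1 else i.+1.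

Definition WL0 : vset := fun v =>
  exists i c, [/\ 1 <= i <= n1, 1 <= c <= n3, in_block i c & v = (i, yL c, c)].
Definition WR0 : vset := fun v =>
  exists i c, [/\ 1 <= i <= n1, 1 <= c <= n3, in_block i c & v = (succ1 i, yR c, c)].
Definition W0 : vset := fun v => WL0 v \/ WR0 v.

Definition middle_cone (W : vset) : Prop :=
  if odd n2 && (kk <= 1) then
    exists x z, [/\ WL0 (x, 1, z), x \notin [:: 1; 2; n1] &
      forall v, W v <-> ((W0 v /\ v <> (x, 1, z)) \/ v = (x, n2, z))]
  else forall v, W v <-> W0 v.

End MCC.

From Pilot Require Import Defs.
From mathcomp Require Import all_boot zify.
Set Implicit Arguments. Unset Strict Implicit. Unset Printing Implicit Defensive.

(* Every column c of block i carries exactly two landmarks, L_c = (i, yL c, c) and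
   R_c = (i + 1, yR c, c), so the colour-3 hyperedges are the pairs {L_c, R_c}.
   Two facts about the labels drive the argument. Within a block the left labels are
   pairwise distinct, and so are the right ones: the labels run through a period h
   (resp. f, skipping the columns of S), and a block longer than the period starts
   with a column of S. And a left label equals a right label only at the value n2,
   which at least three landmarks carry, so it is never a colour-2 hyperedge of size
   two. Nor can n2 be both a right label of block i + 1 and a left label of block i,
   because neither two long blocks nor the blocks x and 1 are consecutive.
   In a bad 4-cycle of colour 3 the two column pairs are joined by an equal x and an
   equal label, which forces one of these coincidences. In a bad 4-cycle of colour 1
   or 2 one link is a column pair {L_d, R_d}, and the two hyperedges through L_d and
   R_d cannot be joined by the remaining colour. *)

Lemma count_gt1_pair (T : eqType) (p : pred T) (s : seq T) : uniq s -> 1 < count p s ->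
  exists a b, [/\ a \in s, b \in s, a != b, p a & p b].
Proof.
elim: s => [|x s IHs] //= /andP [xNs us].
case: (boolP (p x)) => px /=.
- rewrite add1n ltnS -has_count => /hasP [b bs pb].
  exists x, b; split; rewrite ?inE ?eqxx ?bs ?orbT //.
  by apply: contraNneq xNs => ->.
- rewrite add0n => /(IHs us) [a [b [as' bs ab pa pb]]].
  by exists a, b; rewrite !inE as' bs !orbT.
Qed.

Lemma modnD_small_neq t m d : 0 < m < d -> (t + m) %% d != t %% d.
Proof.
move=> hm; rewrite -[X in _ != X %% d]addn0 eqn_modDl modn_small ?mod0n; lia.
Qed.

Lemma count_iota_gt0 (p : pred nat) c n k : c <= k < c + n -> p k -> 0 < count p (iota c n).
Proof. by move=> hk pk; rewrite -has_count; apply/hasP; exists k; rewrite ?mem_iota. Qed.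

Lemma count_iota_lt (p : pred nat) c n k : c <= k < c + n -> ~~ p k ->
  count p (iota c n) < n.
Proof.
move=> hk pk; have := count_predC p (iota c n).
have := count_iota_gt0 (p := predC p) hk pk; rewrite size_iota; lia.
Qed.

Lemma count_iota_le (p : pred nat) c n : count p (iota c n) <= n.
Proof. by rewrite -{2}(size_iota c n) count_size. Qed.

Lemma ltn_neq_inj (A : nat -> Prop) (g : nat -> nat) :
  (forall c d, A c -> A d -> c < d -> g c != g d) ->
  forall c d, A c -> A d -> g c = g d -> c = d.
Proof.
move=> neq c d Ac Ad /eqP; case: (ltngtP c d) => [lt_cd|lt_dc|//].
- by rewrite (negbTE (neq c d Ac Ad lt_cd)).
- by rewrite eq_sym (negbTE (neq d c Ad Ac lt_dc)).
Qed.

Section Blocks.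

Variables n1 n3 : nat.
Local Notation q := (qq n1 n3).
Local Notation r := (rr n1 n3).
Local Notation ell := (ell n1 n3).
Local Notation LL := (LL n1 n3).
Local Notation inb := (in_block n1 n3).
Local Notation sc := (succ1 n1).

Lemma n3_divE : n3 = q * n1 + r.
Proof. exact: divn_eq. Qed.

Lemma ell_cases i : ell i = q \/ ell i = q.+1 /\ 0 < r.
Proof.
rewrite /ell; case: ifP => ?; case: ifP => ?; try case: ifP => ?; try by left.
all: by right; split => //; lia.
Qed.

Lemma LL1 : LL 1 = 0.
Proof. by rewrite /LL big_geq. Qed.

Lemma LL_S i : 0 < i -> LL i.+1 = LL i + ell i.
Proof. by move=> hi; rewrite /LL big_nat_recr. Qed.

Lemma leq_LL i j : 0 < i -> i <= j -> LL i <= LL j.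
Proof.
move=> hi; elim: j => [|j IHj]; first lia.
rewrite leq_eqVlt => /orP [/eqP -> //|]; rewrite ltnS => hij.
by rewrite LL_S; [have := IHj hij; lia | lia].
Qed.

Lemma in_block_uniq i j c : 0 < i -> 0 < j -> inb i c -> inb j c -> i = j.
Proof.
move=> hi hj; wlog hij : i j hi hj / i < j.
  move=> wlog_ij bi bj; case: (ltngtP i j) => [lt_ij|lt_ji|//].
  - exact: wlog_ij.
  - exact/esym/(wlog_ij j i).
have := leq_LL (ltn0Sn i) hij; rewrite LL_S // /in_block; lia.
Qed.

Lemma in_block_other i d : inb i d ->
  (exists d', d' <> d /\ inb i d') \/ (forall c, inb i c -> c = d).
Proof.
rewrite /in_block => hd; case: (ltnP (LL i + 1) d) => h1.
  by left; exists d.-1; split; [lia | rewrite /in_block; lia].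
case: (ltnP d (LL i + ell i)) => h2.
  by left; exists d.+1; split; [lia | rewrite /in_block; lia].
by right => c hc; lia.
Qed.

Lemma succ1_inj i j : 0 < i <= n1 -> 0 < j <= n1 -> sc i = sc j -> i = j.
Proof. rewrite /succ1 => hi hj; case: eqP => ei; case: eqP => ej; lia. Qed.

Lemma succ1_range i : 0 < i <= n1 -> 0 < sc i <= n1.
Proof. rewrite /succ1 => hi; case: eqP => ei; lia. Qed.

Lemma LL_S_closed_small i : r <= n1 - r -> LL i.+1 = i * q + minn r (uphalf i).
Proof.
move=> hr; elim: i => [|i IHi]; first by rewrite LL1.
rewrite LL_S // IHi /ell hr mulSn.
have := odd_double_half i; have := uphalf_half i; rewrite /= -/(uphalf i) -/(half i).
by case: (odd i) => /= U O; case: ifP => ?; lia.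
Qed.

Lemma LL_S_closed_large i : n1 - r < r ->
  LL i.+1 = i * q + minn (n1 - r) (uphalf i) + (i - 2 * (n1 - r)).
Proof.
move=> hr; elim: i => [|i IHi]; first by rewrite LL1.
rewrite LL_S // IHi /ell leqNgt hr mulSn.
have := odd_double_half i; have := uphalf_half i; rewrite /= -/(uphalf i) -/(half i).
by case: (odd i) => /= U O; case: ifP => ?; lia.
Qed.

Hypothesis n1_gt1 : 1 < n1.

Lemma succ1_neq i : 0 < i <= n1 -> sc i <> i.
Proof. rewrite /succ1 => hi; case: eqP => ei; lia. Qed.

Lemma rr_lt : r < n1.
Proof. by rewrite ltn_pmod // ltnW. Qed.

Hypothesis n3_large : 3 * n1 <= 2 * n3.

Lemma qq_gt0 : 0 < q.
Proof. have := n3_divE; have := rr_lt; case: q => [|q']; nia. Qed.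

Lemma ell1_ge2 : 2 <= ell 1.
Proof.
have := n3_divE; have := rr_lt; have := qq_gt0.
rewrite /ell; case: ifP => ?; case: ifP => ? /=; try lia.
have r0 : r = 0 by lia.
by rewrite r0 addn0 => E; case: q E => [|[|q']]; nia.
Qed.

Lemma in_block_1_1 : inb 1 1.
Proof. by rewrite /in_block LL1; have := ell1_ge2; lia. Qed.

Lemma in_block_1_2 : inb 1 2.
Proof. by rewrite /in_block LL1; have := ell1_ge2; lia. Qed.

Lemma LL_total : LL n1.+1 = n3.
Proof.
have := n3_divE; have := rr_lt; have := odd_double_half n1; have := uphalf_half n1.
case: (leqP r (n1 - r)) => hr.
- by rewrite LL_S_closed_small //; case: (odd n1) => /=; lia.
- by rewrite LL_S_closed_large //; case: (odd n1) => /=; lia.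
Qed.

Lemma in_block_range i c : 0 < i <= n1 -> inb i c -> 0 < c <= n3.
Proof.
move=> /andP [hi hin]; have := leq_LL (ltn0Sn i) (hin : i < n1.+1).
by rewrite LL_S // LL_total /in_block; lia.
Qed.

End Blocks.

Definition crowded (W : vset) (k a : nat) : Prop :=
  exists u1 u2 u3, [/\ [/\ W u1, W u2 & W u3],
    [/\ coord k u1 = a, coord k u2 = a & coord k u3 = a] &
    [/\ u1 <> u2, u1 <> u3 & u2 <> u3]].

Section Hyperedges.

Variable W : vset.

Lemma is_hedge2_sym k u v : is_hedge2 W k u v -> is_hedge2 W k v u.
Proof. by move=> [a Ha]; exists a => w; rewrite Ha; tauto. Qed.

Lemma is_hedge2_in k u v : is_hedge2 W k u v -> [/\ W u, W v & coord k v = coord k u].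
Proof.
move=> [a Ha]; have [_ /(_ (or_introl erefl)) [Wu Eu]] := Ha u.
by have [_ /(_ (or_intror erefl)) [Wv Ev]] := Ha v; rewrite Eu Ev.
Qed.

Lemma is_hedge2_mem k u v w : is_hedge2 W k u v -> W w -> coord k w = coord k u ->
  w = u \/ w = v.
Proof.
move=> huv Ww E; case: huv => a Ha; have [_ /(_ (or_introl erefl)) [_ Eu]] := Ha u.
by apply/Ha; rewrite E Eu.
Qed.

Lemma is_hedge2_uncrowded k u v : is_hedge2 W k u v -> ~ crowded W k (coord k u).
Proof.
move=> huv [u1 [u2 [u3 [[W1 W2 W3] [E1 E2 E3] [n12 n13 n23]]]]].
by case: (is_hedge2_mem huv W1 E1) => e1; case: (is_hedge2_mem huv W2 E2) => e2;
  case: (is_hedge2_mem huv W3 E3) => e3; subst.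
Qed.

End Hyperedges.

Lemma bad4cycle_ext (W W' : vset) : (forall v, W v <-> W' v) -> bad4cycle W -> bad4cycle W'.
Proof.
move=> WW'.
have hedge_ext k u v : is_hedge2 W k u v -> is_hedge2 W' k u v.
  by move=> [a Ha]; exists a => w; rewrite -Ha WW'.
move=> [w1 [w2 [w3 [w4 [i [j [k [[W1 W2 W3 W4] [D [C [H12 H34 Ej Ek]]]]]]]]]]].
exists w1, w2, w3, w4, i, j, k; split; first by split; apply/WW'.
by do 2!split => //; split => //; apply: hedge_ext.
Qed.

Section MiddleCone.

Variables n1 n2 n3 : nat.
Hypothesis n1_gt1 : 1 < n1.
Hypothesis n3_large : 3 * n1 <= 2 * n3.
Hypothesis n2_ge3 : 3 <= n2.
Hypothesis n3_small : 2 * n3 <= n1 * n2.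

Local Notation q := (qq n1 n3).
Local Notation r := (rr n1 n3).
Local Notation ell := (ell n1 n3).
Local Notation LL := (LL n1 n3).
Local Notation inb := (in_block n1 n3).
Local Notation sc := (succ1 n1).
Local Notation f := (ff n2).
Local Notation h := (hh n2).
Local Notation kk := (kk n1 n2 n3).
Local Notation inS := (inS n1 n2 n3).
Local Notation inS1 := (inS1 n1 n2 n3).
Local Notation yR := (yR n1 n2 n3).

Lemma ff_gt0 : 0 < f. Proof. rewrite /ff; lia. Qed.
Lemma hh_gt0 : 0 < h. Proof. rewrite /hh; lia. Qed.

Lemma n2_oddE : odd n2 -> n2 = f.*2.+1.
Proof. by move=> o; have := odd_double_half n2; rewrite o /ff; lia. Qed.

Lemma n2_evenE : ~~ odd n2 -> n2 = h.*2.
Proof. by move=> /negbTE o; have := odd_double_half n2; rewrite o /hh; lia. Qed.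

Lemma ell_le_hh i : ~~ odd n2 -> ell i <= h.
Proof.
move=> /n2_evenE E; have := n3_divE n1 n3; have := rr_lt n3 n1_gt1.
by case: (ell_cases n1 n3 i) => [|[]] ->; nia.
Qed.

Lemma long_blockP i : odd n2 -> f < ell i ->
  [/\ q = f, 0 < r, 2 * r <= n1, odd i & i <= 2 * r /\ ell i = f.+1].
Proof.
move=> /n2_oddE E hl; have := n3_divE n1 n3; have := rr_lt n3 n1_gt1 => ? ?.
have hq : q = f by case: (ell_cases n1 n3 i) hl => [|[]] ->; nia.
move: hl; rewrite /ell; case: ifP => ?; last lia.
case: ifP => ?; last lia.
by case: ifP => oi; [split => //; lia | lia].
Qed.

Lemma long_blocks_apart i : odd n2 -> 0 < i <= n1 -> f < ell i -> ~ f < ell (sc i).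
Proof.
move=> o hi /(long_blockP o) [_ _ hr oi [ii _]] /(long_blockP o) [_ _ _ osi _].
move: osi; rewrite /succ1; case: eqP => [ein|_] /=; last by rewrite oi.
by move: oi; rewrite (_ : i = r.*2) ?odd_double //; lia.
Qed.

Lemma kk_le1_short i : odd n2 -> kk <= 1 -> 1 < i <= n1 -> ell i <= f.
Proof.
move=> o hk hi; rewrite leqNgt; apply/negP => hl; have [hq hr _ _ _] := long_blockP o hl.
have l1 : f < ell 1 by rewrite /ell; do !case: ifP => ? //=; lia.
suff : 2 <= kk by lia.
rewrite /kk -size_filter (_ : 2 = size [:: 1; i]) //.
apply: uniq_leq_size => [|y]; first by rewrite /= inE andbT; apply/eqP; lia.
by rewrite !inE => /orP [] /eqP ->; rewrite mem_filter mem_iota ?l1 ?hl /=; lia.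
Qed.

Lemma kk_ge2_long_pair : 2 <= kk -> exists i1 i2,
  [/\ 0 < i1 <= n1, 0 < i2 <= n1, i1 != i2, f < ell i1 & f < ell i2].
Proof.
move=> /(count_gt1_pair (iota_uniq 1 n1)) [a [b [+ + ab la lb]]].
by rewrite !mem_iota => ha hb; exists a, b; split => //; lia.
Qed.

(* The blocks containing a column of S. *)
Definition S_block i := if 2 <= kk then f < ell i else i == 1.

Lemma inS0 : inS 0 = false.
Proof.
rewrite /Defs.inS; case: ifP => // _; apply/hasP => [[i _ /andP [_ /eqP]]].
by rewrite /ss addn1.
Qed.

Lemma inS_kk_le1 c : kk <= 1 -> inS c = (c == 1).
Proof. by move=> hk; rewrite /Defs.inS ifN // -leqNgt. Qed.

Lemma inS_start c : inS c ->
  exists i, [/\ 0 < i <= n1, c = LL i + 1, 2 <= ell i & S_block i].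
Proof.
rewrite /Defs.inS /S_block; case: ifP => hk.
- move/hasP => [i]; rewrite mem_iota => hi /andP [hl /eqP ->].
  by exists i; split; rewrite /ss //; have := ff_gt0; lia.
- move/eqP => ->; exists 1; split; rewrite ?LL1 //; first lia.
  exact: ell1_ge2 n1_gt1 n3_large.
Qed.

Lemma inS_block c i : inS c -> 0 < i <= n1 -> inb i c ->
  [/\ c = LL i + 1, inb i c.+1 & S_block i].
Proof.
move=> /inS_start [i' [hi' -> hl hS]] hi hb.
have bi' : inb i' (LL i' + 1) by rewrite /in_block; lia.
have ei : i' = i by apply: (in_block_uniq _ _ bi' hb); lia.
subst i'.
by split => //; rewrite /in_block; lia.
Qed.

Lemma inS1_block c i : inS1 c -> 0 < i <= n1 -> inb i c ->
  [/\ c = LL i + 2, inb i c.-1 & S_block i].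
Proof.
case: c => [|c] //; rewrite /Defs.inS1 /= => /inS_start [i' [hi' -> hl hS]] hi hb.
have bi' : inb i' (LL i' + 1).+1 by rewrite /in_block; lia.
have ei : i' = i by apply: (in_block_uniq _ _ bi' hb); lia.
subst i'.
by split => //; [lia | rewrite /in_block; lia].
Qed.

Lemma inS_nonadjacent c : inS c -> ~~ inS c.+1.
Proof.
move=> sc'; apply/negP => sc1; have [i [hi ce hl _]] := inS_start sc'.
have bc : inb i c by rewrite /in_block; lia.
have [e1 bi1 _] := inS_block sc' hi bc.
by have [] := inS_block sc1 hi bi1; lia.
Qed.

Lemma long_block_inS i : odd n2 -> 0 < i <= n1 -> f < ell i ->
  ell i = f.+1 /\ inS (LL i + 1).
Proof.
move=> o hi hl; have [_ _ _ _ [_ ->]] := long_blockP o hl; split => //.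
rewrite /Defs.inS; case: ifP => hk.
- by apply/hasP; exists i; rewrite ?mem_iota ?hl /ss ?eqxx //; lia.
- have -> : i = 1; last by rewrite LL1.
  have hk1 : kk <= 1 by rewrite leqNgt hk.
  by have := @kk_le1_short i o hk1; lia.
Qed.

Definition fill c := count (fun c' => ~~ inS c') (iota 1 (c - 1)).

Lemma fill_shift c d : 0 < c <= d ->
  fill d = fill c + count (fun c' => ~~ inS c') (iota c (d - c)).
Proof.
move=> hcd; rewrite /fill (_ : d - 1 = (c - 1) + (d - c)); last lia.
by rewrite iotaD count_cat; congr (_ + count _ (iota _ _)); lia.
Qed.

Lemma count_notinS1 m : count (fun c' => ~~ inS1 c') (iota 1 m) =
  count (fun c' => ~~ inS c') (iota 1 m) + inS m.
Proof.
elim: m => [|m IHm]; first by rewrite inS0.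
rewrite (_ : iota 1 m.+1 = iota 1 m ++ [:: m.+1]); last by rewrite -(addn1 m) iotaD add1n addn1.
rewrite !count_cat IHm /= /Defs.inS1 /=.
by case: (inS m); case: (inS m.+1) => /=; lia.
Qed.

Lemma fill_inS1 c : inS1 c -> fill c = fill c.-1.
Proof.
case: c => [|c] //= sc'; have sc : inS c by [].
have c_gt0 : 0 < c by case: c sc {sc'} => //; rewrite inS0.
by rewrite (fill_shift (c := c)) ?subSnn /= ?sc ?addn0 //; lia.
Qed.

(* A block longer than f starts with a column of S. *)
Lemma count_notinS_block i c d : odd n2 -> 0 < i <= n1 -> inb i c -> inb i d -> c < d ->
  count (fun c' => ~~ inS c') (iota c (d - c)) < f.
Proof.
move=> o hi; rewrite /in_block => hc hd hcd.
case: (leqP (ell i) f) => hl.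
  by have := count_iota_le (fun c' => ~~ inS c') c (d - c); lia.
have [el s1] := long_block_inS o hi hl.
case: (boolP (c == LL i + 1)) => [/eqP ec|nc].
  have := @count_iota_lt (fun c' => ~~ inS c') c (d - c) (LL i + 1); rewrite s1; lia.
by have := count_iota_le (fun c' => ~~ inS c') c (d - c); lia.
Qed.

Lemma fill_block_neq i c d : odd n2 -> 0 < i <= n1 -> inb i c -> inb i d -> c < d ->
  0 < count (fun c' => ~~ inS c') (iota c (d - c)) -> fill c %% f != fill d %% f.
Proof.
move=> o hi hc hd hcd cnt_gt0; rewrite eq_sym (fill_shift (c := c)).
  by apply: modnD_small_neq; rewrite cnt_gt0; exact: count_notinS_block o hi hc hd hcd.
by move: hc; rewrite /in_block; lia.
Qed.

Variables (md : bool) (x z : nat).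
Hypothesis mod_ok : md -> [/\ odd n2, kk <= 1, 1 < x < n1 & inb x z].

(* Left labels after the optional move of the landmark in column z to height n2. *)
Definition yl c := if md && (c == z) then n2 else yL n1 n2 n3 c.

Lemma yl_evenE c : ~~ odd n2 -> yl c = (c - 1) %% h + 1.
Proof.
rewrite /yl /yL => /negbTE ev; rewrite ev.
by case: md mod_ok => // /(_ isT) [o]; rewrite o in ev.
Qed.

Lemma yR_evenE c : ~~ odd n2 -> yR c = h + (c - 1) %% h + 1.
Proof. by rewrite /Defs.yR => /negbTE ->. Qed.

Lemma yl_oddE c : odd n2 -> yl c = if inS c || md && (c == z) then n2 else fill c %% f + 1.
Proof. by rewrite /yl /yL => ->; rewrite /yL_odd; case: (md && (c == z)); case: (inS c). Qed.

Lemma yR_oddE c : odd n2 -> yR c = if inS1 c then n2 else f + fill c %% f + 1.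
Proof.
rewrite /Defs.yR => ->; rewrite /yR_odd; case: ifP => // nS1.
case: c nS1 => [|c] // nS1; rewrite /fill subn1 /= count_notinS1.
by move: nS1; rewrite /Defs.inS1 /= => ->; rewrite addn0.
Qed.

Lemma yl_eq_n2 c : odd n2 -> (yl c == n2) = inS c || md && (c == z).
Proof.
move=> o; rewrite yl_oddE //; have := ltn_pmod (fill c) ff_gt0; have := n2_oddE o.
by case: ifP; rewrite ?eqxx // => _; case: eqP => //; lia.
Qed.

Lemma yR_eq_n2 c : odd n2 -> (yR c == n2) = inS1 c.
Proof.
move=> o; rewrite yR_oddE //; have := ltn_pmod (fill c) ff_gt0; have := n2_oddE o.
by case: ifP; rewrite ?eqxx // => _; case: eqP => //; lia.
Qed.

Lemma block_z i : md -> 0 < i <= n1 -> inb i z -> i = x.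
Proof. by move=> /mod_ok [_ _ hx bx] hi hb; apply: (in_block_uniq _ _ hb bx); lia. Qed.

Lemma inS_block1 c i : md -> inS c -> 0 < i <= n1 -> inb i c -> i = 1.
Proof.
move=> /mod_ok [_ hk _ _]; rewrite inS_kk_le1 // => /eqP -> hi hb.
by apply: (in_block_uniq _ _ hb (in_block_1_1 n1_gt1 n3_large)); lia.
Qed.

Lemma yl_eq_yR c d : yl c = yR d -> odd n2 /\ yl c = n2.
Proof.
case: (boolP (odd n2)) => o E; last first.
  by move: E; rewrite yl_evenE // yR_evenE //; have := ltn_pmod (c - 1) hh_gt0; lia.
split => //; apply/eqP; rewrite yl_eq_n2 //; move: E; rewrite yl_oddE // yR_oddE //.
have := ltn_pmod (fill c) ff_gt0; have := ltn_pmod (fill d) ff_gt0; have := n2_oddE o.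
by case: ifP => // _; case: ifP => _; lia.
Qed.

Lemma yl_n2_odd c : yl c = n2 -> odd n2.
Proof.
case: (boolP (odd n2)) => // ev; rewrite yl_evenE // => E.
by have := ltn_pmod (c - 1) hh_gt0; have := n2_evenE ev; lia.
Qed.

Lemma mod_block_neq i c d : ~~ odd n2 -> inb i c -> inb i d -> c < d ->
  (c - 1) %% h != (d - 1) %% h.
Proof.
move=> ev hc hd hcd; rewrite eq_sym (_ : d - 1 = c - 1 + (d - c)).
  by apply: modnD_small_neq; have := ell_le_hh i ev; move: hc hd; rewrite /in_block; lia.
by move: hc; rewrite /in_block; lia.
Qed.

Lemma yl_top_block_uniq i c d : 0 < i <= n1 -> inb i c -> inb i d ->
  inS c || md && (c == z) -> inS d || md && (d == z) -> c = d.
Proof.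
move=> hi hc hd /orP [sc|/andP [m /eqP ec]] /orP [sd|/andP [m' /eqP ed]].
- by have [-> _ _] := inS_block sc hi hc; have [-> _ _] := inS_block sd hi hd.
- subst d; have := block_z m' hi hd; have := inS_block1 m' sc hi hc; have [] := mod_ok m'; lia.
- subst c; have := block_z m hi hc; have := inS_block1 m sd hi hd; have [] := mod_ok m; lia.
- by rewrite ec ed.
Qed.

Lemma yl_block_neq i c d : 0 < i <= n1 -> inb i c -> inb i d -> c < d -> yl c != yl d.
Proof.
move=> hi hc hd hcd; case: (boolP (odd n2)) => o; last first.
  by rewrite !yl_evenE // eqn_add2r (mod_block_neq o hc hd hcd).
rewrite !yl_oddE //; have := n2_oddE o.
have := ltn_pmod (fill c) ff_gt0; have := ltn_pmod (fill d) ff_gt0.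
case: ifP => tc; case: ifP => td; try lia.
  by move=> *; move: hcd; rewrite (yl_top_block_uniq hi hc hd tc td) ltnn.
move=> _ _ _; rewrite eqn_add2r (fill_block_neq o hi hc hd hcd) //.
by apply: (count_iota_gt0 (k := c)); [lia | case/norP: (negbT tc)].
Qed.

Lemma yR_block_neq i c d : 0 < i <= n1 -> inb i c -> inb i d -> c < d -> yR c != yR d.
Proof.
move=> hi hc hd hcd; case: (boolP (odd n2)) => o; last first.
  by rewrite !yR_evenE // eqn_add2r eqn_add2l (mod_block_neq o hc hd hcd).
rewrite !yR_oddE //; have := n2_oddE o.
have := ltn_pmod (fill c) ff_gt0; have := ltn_pmod (fill d) ff_gt0.
case: ifP => tc; case: ifP => td; try lia.
  have [ec _ _] := inS1_block tc hi hc; have [ed _ _] := inS1_block td hi hd; lia.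
move=> _ _ _; rewrite eqn_add2r eqn_add2l (fill_block_neq o hi hc hd hcd) //.
case: (boolP (inS c)) => sc'; last by apply: (count_iota_gt0 (k := c)); lia.
(* c + 1 lies in S + 1, hence differs from d and lies outside S. *)
have ncd : c.+1 != d by apply: contraFneq td => <-.
by apply: (count_iota_gt0 (k := c.+1)); [lia | exact: inS_nonadjacent].
Qed.

Lemma yl_inj_block i c d : 0 < i <= n1 -> inb i c -> inb i d -> yl c = yl d -> c = d.
Proof. by move=> hi; apply: ltn_neq_inj => c' d'; apply: yl_block_neq. Qed.

Lemma yR_inj_block i c d : 0 < i <= n1 -> inb i c -> inb i d -> yR c = yR d -> c = d.
Proof. by move=> hi; apply: ltn_neq_inj => c' d'; apply: yR_block_neq. Qed.

Lemma S_block_apart j : odd n2 -> 0 < j <= n1 -> S_block j -> ~ S_block (sc j).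
Proof.
rewrite /S_block => o hj; case: ifP => _; first exact: long_blocks_apart.
by move=> /eqP -> /eqP; rewrite /succ1; case: eqP; lia.
Qed.

Lemma yR_neq_yl_succ j a b : 0 < j <= n1 -> inb (sc j) a -> inb j b -> yR a <> yl b.
Proof.
move=> hj ha hb E; have [o top] := yl_eq_yR (esym E).
have /eqP := top; rewrite yl_eq_n2 // => /orP [sb | /andP [m /eqP bz]].
  move/eqP: E; rewrite top yR_eq_n2 // => s1a.
  have [_ _ Sa] := inS1_block s1a (succ1_range hj) ha.
  by have [_ _ Sb] := inS_block sb hj hb; apply: S_block_apart Sa.
have [_ hk hx _] := mod_ok m; subst b; have jx := block_z m hj hb; subst j.
move/eqP: E; rewrite top yR_eq_n2 // => s1a.
have [_ _] := inS1_block s1a (succ1_range hj) ha; rewrite /S_block leqNgt ltnS hk /=.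
by rewrite /succ1; case: ifP => /eqP; lia.
Qed.

Lemma yR_neq_yl_col i c : 0 < i <= n1 -> inb i c -> yR c <> yl c.
Proof.
move=> hi hc E; have [o top] := yl_eq_yR (esym E).
move/eqP: (E); rewrite top yR_eq_n2 // => s1c; have [_ _ Sc] := inS1_block s1c hi hc.
have /eqP := top; rewrite yl_eq_n2 // => /orP [sc' | /andP [m /eqP cz]].
  by move: s1c sc'; case: c {hc E top} => [|c] //= sc'; apply/negP/inS_nonadjacent.
have [_ hk hx _] := mod_ok m; subst c; have := block_z m hi hc.
by move: Sc; rewrite /S_block leqNgt ltnS hk => /eqP; lia.
Qed.

Lemma yR_top_prev i a : odd n2 -> 0 < i <= n1 -> inb i a -> yR a = n2 -> inb i a.-1 /\ 0 < a.
Proof.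
move=> o hi ha /eqP; rewrite yR_eq_n2 // => /inS1_block /(_ hi ha) [ea hb _].
by split => //; lia.
Qed.

(* Equal left labels force equal right labels, up to the shift across one column of S. *)
Lemma yl_eq_shift i d e : 0 < i <= n1 -> inb i e -> e <> d -> yl e = yl d ->
  yl d <> n2 -> (odd n2 -> yR d <> n2) -> exists g, [/\ g <> d, inb i g & yR g = yR d].
Proof.
move=> hi he ned E nld; case: (boolP (odd n2)) => o nrd; last first.
  by exists e; split => //; move: E; rewrite !yl_evenE // !yR_evenE //; lia.
move/(_ isT): nrd => nrd.
have te : (inS e || md && (e == z)) = false by rewrite -yl_eq_n2 // E; apply/negbTE/eqP.
move/eqP/negbTE: nld; rewrite yl_eq_n2 // => td.
move/eqP/negbTE: nrd; rewrite yR_eq_n2 // => s1d.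
move: E; rewrite !yl_oddE // td te => /addIn E.
case: (boolP (inS1 e)) => s1e.
- have [_ hem _] := inS1_block s1e hi he.
  have se : inS e.-1 by move: s1e; rewrite /Defs.inS1 => /andP [].
  exists e.-1; split => //.
    by move=> ed; move: td; rewrite -ed se.
  rewrite !yR_oddE // s1d -(fill_inS1 s1e) E.
  case: (e.-1) se => [|k] //; rewrite /Defs.inS1 /= => sk; case: ifP => //.
  by case: k sk => [|k] sk; rewrite ?inS0 // => /inS_nonadjacent; rewrite sk.
- by exists e; split => //; rewrite !yR_oddE // (negbTE s1e) s1d E.
Qed.

Definition Lv i c : vtx := (i, yl c, c).
Definition Rv i c : vtx := (sc i, yR c, c).

Definition landmark : vset := fun v =>
  exists i c, [/\ 0 < i <= n1, inb i c & v = Lv i c \/ v = Rv i c].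

Lemma landmark_Lv i c : 0 < i <= n1 -> inb i c -> landmark (Lv i c).
Proof. by move=> hi hc; exists i, c; split => //; left. Qed.

Lemma landmark_Rv i c : 0 < i <= n1 -> inb i c -> landmark (Rv i c).
Proof. by move=> hi hc; exists i, c; split => //; right. Qed.

Hypothesis mod_needed : odd n2 -> kk <= 1 -> md.

(* Witnesses: the columns s_i of two long blocks and the column after the first one;
   without two long blocks, the columns 1, z and 2. *)
Lemma top_row_crowded : odd n2 -> crowded landmark 2 n2.
Proof.
move=> o; case: (leqP 2 kk) => hk.
- have [i1 [i2 [hi1 hi2 ne l1 l2]]] := kk_ge2_long_pair hk.
  have [e1 s1] := long_block_inS o hi1 l1; have [e2 s2] := long_block_inS o hi2 l2.
  have b1 : inb i1 (LL i1 + 1) by rewrite /in_block; lia.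
  have b1' : inb i1 (LL i1 + 1).+1 by rewrite /in_block; have := ff_gt0; lia.
  have b2 : inb i2 (LL i2 + 1) by rewrite /in_block; lia.
  exists (Lv i1 (LL i1 + 1)), (Lv i2 (LL i2 + 1)), (Rv i1 (LL i1 + 1).+1); split.
  + by split; [apply: landmark_Lv | apply: landmark_Lv | apply: landmark_Rv].
  + by split; apply/eqP; rewrite /= ?yl_eq_n2 ?yR_eq_n2 ?s1 ?s2.
  + split; first by case=> ei _ _; move/eqP: ne.
      by case=> _ _; lia.
    case=> _ _ ec; move/eqP: ne; apply.
    by apply: (in_block_uniq _ _ b1'); rewrite -?ec //; lia.
- have m : md by apply: mod_needed; lia.
  have [_ hk1 hx bx] := mod_ok m; have b11 := in_block_1_1 n1_gt1 n3_large.
  have b12 := in_block_1_2 n1_gt1 n3_large.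
  have [z1 z2] : z <> 1 /\ z <> 2.
    have x_ne1 : x <> 1 by lia.
    by split => ez; apply: x_ne1; apply/esym/(block_z m); rewrite ?ez //; lia.
  exists (Lv 1 1), (Lv x z), (Rv 1 2); split.
  + by split; [apply: landmark_Lv | apply: landmark_Lv | apply: landmark_Rv] => //; lia.
  + by split; apply/eqP; rewrite /= ?yl_eq_n2 ?yR_eq_n2 // /Defs.inS1 ?inS_kk_le1 // m eqxx ?orbT.
  + by split; case=> *; lia.
Qed.

Lemma hedge2_top_free p q : odd n2 -> is_hedge2 landmark 2 p q -> coord 2 p <> n2.
Proof. by move=> o hpq E; apply: (is_hedge2_uncrowded hpq); rewrite E; exact: top_row_crowded. Qed.

Lemma landmark_same_column u v : landmark u -> landmark v -> u <> v -> coord 3 u = coord 3 v ->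
  exists i c, [/\ 0 < i <= n1, inb i c &
    (u = Lv i c /\ v = Rv i c) \/ (u = Rv i c /\ v = Lv i c)].
Proof.
move=> [i [c [hi hc Eu]]] [i' [c' [hi' hc' Ev]]] nuv.
case: Eu => Eu; case: Ev => Ev; subst u v => /= ecc; subst c';
  have ei : i' = i by apply: (in_block_uniq _ _ hc' hc); lia.
all: by subst i'; exists i, c; split => //; tauto.
Qed.

(* Rules out the bad 4-cycles of colour ci whose two links have colours 3 and co. *)
Definition column_unlinked ci co := forall i d u v, 0 < i <= n1 -> inb i d ->
  is_hedge2 landmark ci u (Lv i d) -> is_hedge2 landmark ci v (Rv i d) ->
  u <> Lv i d -> v <> Rv i d -> u <> v -> coord co u <> coord co v.

Lemma column_unlinked_12 : column_unlinked 1 2.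
Proof.
move=> i d u v hi hd hu hv nu nv nuv E2.
have hu' := is_hedge2_sym hu; have hv' := is_hedge2_sym hv.
have [_ Wu Eu] := is_hedge2_in hu'; have [_ Wv Ev] := is_hedge2_in hv'.
case: (in_block_other hd) => [[d' [nd hd']]|only_d].
  case: (is_hedge2_mem hu' (landmark_Lv hi hd') erefl) => [[_ /nd]//|eu].
  case: (is_hedge2_mem hv' (landmark_Rv hi hd') erefl) => [[_ /nd]//|ev].
  by subst u v; apply: (yR_neq_yl_col hi hd'); exact: esym E2.
move: Wu Wv => [i1 [e [hi1 he [eu|eu]]]] [i2 [f [hi2 hf [ev|ev]]]]; subst u v => //=.
- by move: Eu => /= ei; subst i1; apply: nu; rewrite (only_d _ he).
- by move: Eu => /= ei; subst i1; apply: nu; rewrite (only_d _ he).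
- move: E2 Eu => /= E2 Eu; have [o top] := yl_eq_yR (esym E2).
  have [he' e_gt0] := yR_top_prev o hi1 he (etrans E2 top).
  case: (is_hedge2_mem hu' (landmark_Rv hi1 he') Eu) => [[ei _ ed]|[_ ?]]; last lia.
  have ei1 : i1 = i by apply: (in_block_uniq _ _ he'); rewrite ?ed //; lia.
  by subst i1; apply: (succ1_neq n1_gt1 hi).
- move: Ev => /= /(succ1_inj hi2 hi) ei; subst i2.
  by apply: nv; rewrite (only_d _ hf).
Qed.

Lemma column_unlinked_21 : column_unlinked 2 1.
Proof.
move=> i d u v hi hd hu hv nu nv nuv E1.
have hu' := is_hedge2_sym hu; have hv' := is_hedge2_sym hv.
have [_ Wu Eu] := is_hedge2_in hu'; have [_ Wv Ev] := is_hedge2_in hv'.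
have nld : yl d <> n2 by move=> E; exact: hedge2_top_free (yl_n2_odd E) hu' E.
have nrd : odd n2 -> yR d <> n2 by move=> o; exact: hedge2_top_free o hv'.
move: Wu Wv => [i1 [e [hi1 he [eu|eu]]]] [i2 [f [hi2 hf [ev|ev]]]]; subst u v;
  move: Eu Ev E1 => /= Eu Ev E1.
- by have [o top] := yl_eq_yR Ev; apply: (nrd o); rewrite -Ev.
- have ned : e <> d.
    by move=> ed; subst e; apply: nu; rewrite (in_block_uniq _ _ he hd) //; lia.
  have [g [ngd hg Eg]] := yl_eq_shift hi1 he ned Eu nld nrd.
  case: (is_hedge2_mem hv' (landmark_Rv hi1 hg) Eg) => [[_ _ /ngd]//|[]].
  move=> /(succ1_inj hi1 hi2) ei _ _; subst i2.
  by apply: (succ1_neq n1_gt1 hi1); exact: esym E1.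
- by have [o top] := yl_eq_yR (esym Eu); apply: nld.
- by have [o top] := yl_eq_yR (esym Eu); apply: nld.
Qed.

Lemma no_bad4cycle_link ci co w1 w2 w3 w4 j k : column_unlinked ci co ->
  [/\ landmark w1, landmark w2, landmark w3 & landmark w4] ->
  (w1 <> w2 /\ w1 <> w3 /\ w1 <> w4 /\ w2 <> w3 /\ w2 <> w4 /\ w3 <> w4) ->
  is_hedge2 landmark ci w1 w2 -> is_hedge2 landmark ci w3 w4 ->
  (j = 3 /\ k = co) \/ (j = co /\ k = 3) ->
  coord j w2 = coord j w3 -> coord k w4 = coord k w1 -> False.
Proof.
move=> unl [W1 W2 W3 W4] [n12 [n13 [n14 [n23 [n24 n34]]]]] H12 H34 [[-> ->]|[-> ->]] Ej Ek.
- have [i [d [hi hd [[e2 e3]|[e2 e3]]]]] := landmark_same_column W2 W3 n23 Ej; subst w2 w3.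
  + exact: (unl i d w1 w4 hi hd H12 (is_hedge2_sym H34) n12 (nesym n34) n14 (esym Ek)).
  + exact: (unl i d w4 w1 hi hd (is_hedge2_sym H34) H12 (nesym n34) n12 (nesym n14) Ek).
- have [i [d [hi hd [[e4 e1]|[e4 e1]]]]] := landmark_same_column W4 W1 (nesym n14) Ek.
  all: subst w4 w1.
  + exact: (unl i d w3 w2 hi hd H34 (is_hedge2_sym H12) n34 (nesym n12) (nesym n23) (esym Ej)).
  + exact: (unl i d w2 w3 hi hd (is_hedge2_sym H12) H34 (nesym n12) n34 n23 Ej).
Qed.

Lemma no_bad4cycle_pairs w1 w2 w3 w4 j k :
  [/\ landmark w1, landmark w2, landmark w3 & landmark w4] ->
  (w1 <> w2 /\ w1 <> w3 /\ w1 <> w4 /\ w2 <> w3 /\ w2 <> w4 /\ w3 <> w4) ->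
  coord 3 w1 = coord 3 w2 -> coord 3 w3 = coord 3 w4 ->
  (j = 1 /\ k = 2) \/ (j = 2 /\ k = 1) ->
  coord j w2 = coord j w3 -> coord k w4 = coord k w1 -> False.
Proof.
move=> [W1 W2 W3 W4] [n12 [n13 [n14 [n23 [n24 n34]]]]] E12 E34 hjk Ej Ek.
have [i [c [hi hc O1]]] := landmark_same_column W1 W2 n12 E12.
have [i' [d [hi' hd O2]]] := landmark_same_column W3 W4 n34 E34.
case: O1 => [[e1 e2]|[e1 e2]]; case: O2 => [[e3 e4]|[e3 e4]]; subst w1 w2 w3 w4;
case: hjk => [[ej ek]|[ej ek]]; subst j k; move: Ej Ek => /= Ej Ek.
- by subst i'; apply: (yR_neq_yl_succ hi hd hc Ek).
- by subst i; apply: (yR_neq_yl_succ hi' hc hd Ej).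
- have ei := succ1_inj hi hi' Ej; subst i'.
  by apply: n14; rewrite (yl_inj_block hi hd hc Ek).
- by subst i'; apply: n23; rewrite (yR_inj_block hi hc hd Ej).
- by subst i'; apply: n14; rewrite (yR_inj_block hi hd hc Ek).
- have ei := succ1_inj hi' hi Ek; subst i'.
  by apply: n23; rewrite (yl_inj_block hi hc hd Ej).
- by subst i; apply: (yR_neq_yl_succ hi' hc hd (esym Ek)).
- by subst i'; apply: (yR_neq_yl_succ hi hd hc (esym Ej)).
Qed.

Lemma landmark_no_bad4cycle : ~ bad4cycle landmark.
Proof.
move=> [w1 [w2 [w3 [w4 [i [j [k [Ws [D [[hi [hj [hk [nij [nik njk]]]]] [H12 H34 Ej Ek]]]]]]]]]]].
have [[_ _ E12] [_ _ E34]] := (is_hedge2_in H12, is_hedge2_in H34).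
move: hi hj hk nij nik njk Ej Ek H12 H34 E12 E34; rewrite !inE.
move=> /or3P [] /eqP -> /or3P [] /eqP -> /or3P [] /eqP -> //= _ _ _ Ej Ek H12 H34 E12 E34.
- apply: (no_bad4cycle_link (j := 2) (k := 3) column_unlinked_12 Ws D H12 H34 _ Ej Ek).
  by right.
- apply: (no_bad4cycle_link (j := 3) (k := 2) column_unlinked_12 Ws D H12 H34 _ Ej Ek).
  by left.
- apply: (no_bad4cycle_link (j := 1) (k := 3) column_unlinked_21 Ws D H12 H34 _ Ej Ek).
  by right.
- apply: (no_bad4cycle_link (j := 3) (k := 1) column_unlinked_21 Ws D H12 H34 _ Ej Ek).
  by left.
- apply: (no_bad4cycle_pairs (j := 1) (k := 2) Ws D (esym E12) (esym E34) _ Ej Ek).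
  by left.
- apply: (no_bad4cycle_pairs (j := 2) (k := 1) Ws D (esym E12) (esym E34) _ Ej Ek).
  by right.
Qed.

End MiddleCone.

Lemma W0_landmark n1 n2 n3 z v : 1 < n1 -> 3 * n1 <= 2 * n3 ->
  W0 n1 n2 n3 v <-> landmark n1 n2 n3 false z v.
Proof.
move=> n1_gt1 n3_large; split.
- by case=> [] [i [c [hi _ hb ->]]]; exists i, c; split => //; [left | right].
- move=> [i [c [hi hb Ev]]]; have hc := in_block_range n1_gt1 n3_large hi hb.
  by case: Ev => ->; [left | right]; exists i, c.
Qed.

Lemma unmodified_landmark n1 n2 n3 z (W : vset) : 1 < n1 -> 3 * n1 <= 2 * n3 ->
  (forall v, W v <-> W0 n1 n2 n3 v) -> forall v, W v <-> landmark n1 n2 n3 false z v.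
Proof. by move=> n1_gt1 n3_large HW v; rewrite HW; apply: W0_landmark. Qed.

Lemma modified_landmark n1 n2 n3 x z (W : vset) : 1 < n1 -> 3 * n1 <= 2 * n3 ->
  WL0 n1 n2 n3 (x, 1, z) -> x \notin [:: 1; 2; n1] ->
  (forall v, W v <-> (W0 n1 n2 n3 v /\ v <> (x, 1, z)) \/ v = (x, n2, z)) ->
  forall v, W v <-> landmark n1 n2 n3 true z v.
Proof.
move=> n1_gt1 n3_large [x' [z' [hx _ hz [ex y1 ez]]]] xn HW v; subst x' z'.
have x_ne1 : x != 1 by move: xn; rewrite !inE; case: eqP.
have in_z i : 0 < i <= n1 -> in_block n1 n3 i z -> i = x.
  by move=> hi hb; apply: (in_block_uniq _ _ hb hz); lia.
rewrite HW (@W0_landmark n1 n2 n3 z v n1_gt1 n3_large); split.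
- case=> [[[i [c [hi hb [->|->]]]] nv]|->].
  + exists i, c; split => //; left; rewrite /Lv /yl /=.
    case: eqP => // ecz; subst c; exfalso; apply: nv.
    by rewrite /Lv /yl /= (in_z i hi hb) -y1.
  + by exists i, c; split => //; right.
  + by exists x, z; split => //; left; rewrite /Lv /yl eqxx.
- move=> [i [c [hi hb [->|->]]]].
  + rewrite /Lv /yl /=; case: eqP => [ecz|ncz].
    * by subst c; right; rewrite (in_z i).
    * by left; split; [exists i, c; split => //; left | case].
  + left; split; first by exists i, c; split => //; right.
    case=> e1 _ ec; subst c; move: e1; rewrite (in_z i) // /succ1.
    by case: eqP => _; move: x_ne1 => /eqP; lia.
Qed.

Theorem mainTheorem8 (n1 n2 n3 : nat) :
  3 <= n1 -> 3 <= n2 -> n1 <= n3 -> n2 <= n3 ->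
  3 * maxn n1 n2 <= 2 * n3 -> 2 * n3 <= n1 * n2 ->
  forall W : vset, middle_cone n1 n2 n3 W -> ~ bad4cycle W.
Proof.
move=> n1_ge3 n2_ge3 _ _ hmax n3_small W.
have n1_gt1 : 1 < n1 by lia.
have n3_large : 3 * n1 <= 2 * n3 by lia.
have no_bad := @landmark_no_bad4cycle n1 n2 n3 n1_gt1 n3_large n2_ge3 n3_small.
rewrite /middle_cone; case: ifP => [/andP [o hk] | no_mod].
- move=> [x [z [WLz xn HW]]] /(bad4cycle_ext (modified_landmark n1_gt1 n3_large WLz xn HW)).
  have [x' [z' [hx _ hz [ex _ ez]]]] := WLz; subst x' z'.
  apply: (no_bad true x z) => // _; split => //.
  by move: xn; rewrite !inE; do 2!case: eqP => //; lia.
- move=> /(@unmodified_landmark n1 n2 n3 0 W n1_gt1 n3_large) /bad4cycle_ext HW /HW.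
  by apply: (no_bad false 0 0) => // o hk; move: no_mod; rewrite o hk.
Qed.
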